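(* Fix a received sequence $\mathbf y=(y_1,\dots,y_n)$ and let $g^*$ be any minimizer of $\sum_{e\in\mathcal E} g(e)\,b(e)$ over $g\in\mathcal P_{\mathcal T}(H)$ (the output of the LP joint decoder). If $g^*$ is integral, i.e. $g^*\in\{0,1\}^{|\mathcal E|}$, then $g^*$ is the indicator vector of an edge-path $(e_1,\dots,e_n)$ whose input sequence $x_1^n=(x(e_1),\dots,x(e_n))$ is a codeword of $\mathcal C$, and the corresponding input/state pair $(x_1^n,s_1^{n+1})$, with $s_i=s(e_i)$ for $i\le n$ and $s_{n+1}=s'(e_n)$, maximizes $P(y_1^n,s_2^{n+1}\mid x_1^n,s_1)\,P(s_1)$ over all input/state sequence pairs $(x_1^n,s_1^{n+1})\in\{0,1\}^n\times\mathcal S^{n+1}$ with $x_1^n\in\mathcal C$ (i.e. $g^*$ is a joint maximum-likelihood edge-path).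
   Context: Let $\mathcal C\subseteq\{0,1\}^n$ be a binary linear code with parity-check matrix $H$, and let $\mathcal I$ be the collection of sets of column indices participating in each row (parity check) of $H$. For $I\in\mathcal I$ define the local codeword polytope $\mathrm{LCP}(I)=\bigcap_{S\subseteq I,\ |S|\text{ odd}}\{\mathbf f\in[0,1]^n:\sum_{i\in S}f_i-\sum_{i\in I\setminus S}f_i\le |S|-1\}$ and the relaxed polytope $\mathcal P(H)=\bigcap_{I\in\mathcal I}\mathrm{LCP}(I)$. A finite-state channel (FSC) with binary inputs $x\in\{0,1\}$, finite state set $\mathcal S$ and output alphabet $\mathcal Y$ is specified by transition probabilities (or densities in $y$) $P(y,s'\mid x,s)=\Pr(Y_i=y,S_{i+1}=s'\mid X_i=x,S_i=s)$, the same for all $i$, together with an initial state distribution $P(s_1)$; one writes $P(y_1^n,s_2^{n+1}\mid x_1^n,s_1)=\prod_{i=1}^nP(y_i,s_{i+1}\mid x_i,s_i)$. Trellis: given the received $\mathbf y$, the edge set $\mathcal E$ consists of the tuples $e=(i,s,s',x)$ with $i\in\{1,\dots,n\}$, $s,s'\in\mathcal S$, $x\in\{0,1\}$, such that $P(y_i,s'\mid x,s)>0$ (and additionally $P(s)>0$ if $i=1$); write $t(e)=i$, $s(e)=s$, $s'(e)=s'$, $x(e)=x$. The branch metric is $b(e)=-\ln P(y_{t(e)},s'(e)\mid x(e),s(e))$ if $t(e)>1$ and $b(e)=-\ln\big(P(y_1,s'(e)\mid x(e),s(e))P(s(e))\big)$ if $t(e)=1$. An edge-path is a sequence $(e_1,\dots,e_n)$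 of edges with $t(e_i)=i$ and $s'(e_i)=s(e_{i+1})$; it is identified with its indicator vector in $\{0,1\}^{|\mathcal E|}$. The trellis polytope $\mathcal T$ is the set of $g:\mathcal E\to[0,1]$ with $\sum_{e:\,t(e)=1}g(e)=1$ and, for every $i=1,\dots,n-1$ and $j\in\mathcal S$, $\sum_{e:\,t(e)=i,\,s'(e)=j}g(e)=\sum_{e:\,t(e)=i+1,\,s(e)=j}g(e)$. The projection $\mathcal Q$ maps $g$ to $\mathbf f=\mathcal Qg\in[0,1]^n$ with $f_i=\sum_{e:\,t(e)=i,\,x(e)=1}g(e)$. The trellis-wise relaxed polytope is $\mathcal P_{\mathcal T}(H)=\{g\in\mathcal T:\mathcal Qg\in\mathcal P(H)\}$. *)

From HB Require Import structures.
From Stdlib Require Import Reals.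
From mathcomp Require Import all_boot.
Set Implicit Arguments. Unset Strict Implicit. Unset Printing Implicit Defensive.
Local Open Scope R_scope.

Lemma Rplus_assoc' : associative Rplus.
Proof. by move=> a b c; rewrite Rplus_assoc. Qed.
Lemma Rmult_assoc' : associative Rmult.
Proof. by move=> a b c; rewrite Rmult_assoc. Qed.
HB.instance Definition _ := Monoid.isComLaw.Build R R0 Rplus Rplus_assoc' Rplus_comm Rplus_0_l.
HB.instance Definition _ := Monoid.isComLaw.Build R R1 Rmult Rmult_assoc' Rmult_comm Rmult_1_l.

Definition posb (x : R) : bool := if Rlt_dec 0 x then true else false.

(* A binary parity-check matrix with r rows and n columns: H j i = true iff entry is 1.
   Position i (0-based) stands for index i+1 of the paper. *)
Definition check_set (r n : nat) (H : 'I_r -> 'I_n -> bool) (j : 'I_r) : {set 'I_n} :=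
  [set i | H j i].

Definition codeword (r n : nat) (H : 'I_r -> 'I_n -> bool) (x : 'I_n -> bool) : Prop :=
  forall j : 'I_r, ~~ odd #|[set i | H j i && x i]|.

Definition in_LCP (n : nat) (I : {set 'I_n}) (f : 'I_n -> R) : Prop :=
  (forall i, 0 <= f i <= 1) /\
  forall Sset : {set 'I_n}, Sset \subset I -> odd #|Sset| ->
    (\big[Rplus/R0]_(i in Sset) f i - \big[Rplus/R0]_(i in I :\: Sset) f i
       <= INR #|Sset| - 1).

Definition in_relaxed_polytope (r n : nat) (H : 'I_r -> 'I_n -> bool) (f : 'I_n -> R) : Prop :=
  forall j : 'I_r, in_LCP (check_set H j) f.

(* P y s' x s = P(y, s' | x, s); P0 s = P(s_1 = s). *)
(* raw edge tuples (i, s, s', x); time index i is 0-based (i stands for i+1) *)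
Definition edge_tuple (n : nat) (S : finType) := ('I_n * S * S * bool)%type.
Definition et (n : nat) (S : finType) (e : edge_tuple n S) : 'I_n := e.1.1.1.
Definition es (n : nat) (S : finType) (e : edge_tuple n S) : S := e.1.1.2.
Definition es' (n : nat) (S : finType) (e : edge_tuple n S) : S := e.1.2.
Definition ex (n : nat) (S : finType) (e : edge_tuple n S) : bool := e.2.

Definition is_edge (n : nat) (S : finType) (Y : Type)
    (P : Y -> S -> bool -> S -> R) (P0 : S -> R) (y : 'I_n -> Y)
    (e : edge_tuple n S) : bool :=
  posb (P (y (et e)) (es' e) (ex e) (es e)) &&
  ((val (et e) == 0%N) ==> posb (P0 (es e))).

Definition Edge (n : nat) (S : finType) (Y : Type)
    (P : Y -> S -> bool -> S -> R) (P0 : S -> R) (y : 'I_n -> Y) : finType :=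
  {e : edge_tuple n S | is_edge P P0 y e}.

Definition branch_metric (n : nat) (S : finType) (Y : Type)
    (P : Y -> S -> bool -> S -> R) (P0 : S -> R) (y : 'I_n -> Y)
    (e : Edge P P0 y) : R :=
  let t := val e in
  if val (et t) == 0%N
  then (- ln (P (y (et t)) (es' t) (ex t) (es t) * P0 (es t)))
  else (- ln (P (y (et t)) (es' t) (ex t) (es t))).

Definition in_trellis_polytope (n : nat) (S : finType) (Y : Type)
    (P : Y -> S -> bool -> S -> R) (P0 : S -> R) (y : 'I_n -> Y)
    (g : Edge P P0 y -> R) : Prop :=
  (forall e, 0 <= g e <= 1) /\
  \big[Rplus/R0]_(e | val (et (val e)) == 0%N) g e = R1 /\
  forall (i : nat) (j : S), (i.+1 < n)%N ->
    \big[Rplus/R0]_(e | (val (et (val e)) == i) && (es' (val e) == j)) g e =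
    \big[Rplus/R0]_(e | (val (et (val e)) == i.+1) && (es (val e) == j)) g e.

Definition projQ (n : nat) (S : finType) (Y : Type)
    (P : Y -> S -> bool -> S -> R) (P0 : S -> R) (y : 'I_n -> Y)
    (g : Edge P P0 y -> R) (i : 'I_n) : R :=
  \big[Rplus/R0]_(e | (et (val e) == i) && ex (val e)) g e.

Definition in_PT (r n : nat) (H : 'I_r -> 'I_n -> bool) (S : finType) (Y : Type)
    (P : Y -> S -> bool -> S -> R) (P0 : S -> R) (y : 'I_n -> Y)
    (g : Edge P P0 y -> R) : Prop :=
  in_trellis_polytope g /\ in_relaxed_polytope H (projQ g).

Definition LP_cost (n : nat) (S : finType) (Y : Type)
    (P : Y -> S -> bool -> S -> R) (P0 : S -> R) (y : 'I_n -> Y)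
    (g : Edge P P0 y -> R) : R :=
  \big[Rplus/R0]_(e : Edge P P0 y) (g e * branch_metric e).

Definition LP_minimizer (r n : nat) (H : 'I_r -> 'I_n -> bool) (S : finType) (Y : Type)
    (P : Y -> S -> bool -> S -> R) (P0 : S -> R) (y : 'I_n -> Y)
    (g : Edge P P0 y -> R) : Prop :=
  in_PT H g /\ forall g' : Edge P P0 y -> R, in_PT H g' -> (LP_cost g <= LP_cost g').

Definition edge_path (n : nat) (S : finType) (Y : Type)
    (P : Y -> S -> bool -> S -> R) (P0 : S -> R) (y : 'I_n -> Y)
    (p : 'I_n -> Edge P P0 y) : Prop :=
  (forall i, et (val (p i)) = i) /\
  (forall i k : 'I_n, val k = (val i).+1 -> es' (val (p i)) = es (val (p k))).

Definition path_indicator (n : nat) (S : finType) (Y : Type)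
    (P : Y -> S -> bool -> S -> R) (P0 : S -> R) (y : 'I_n -> Y)
    (p : 'I_n -> Edge P P0 y) (e : Edge P P0 y) : R :=
  if e \in codom p then R1 else R0.

(* P(y_1^n, s_2^{n+1} | x_1^n, s_1) P(s_1); st k stands for s_{k+1}, k = 0..n *)
Definition joint_lik (n : nat) (S : finType) (Y : Type)
    (P : Y -> S -> bool -> S -> R) (P0 : S -> R) (y : 'I_n -> Y)
    (x : 'I_n -> bool) (st : 'I_n.+1 -> S) : R :=
  (\big[Rmult/R1]_(i < n) P (y i) (st (lift ord0 i)) (x i) (st (widen_ord (leqnSn n) i))
   * P0 (st ord0)).

From HB Require Import structures.
From Stdlib Require Import Reals Lra Classical FunctionalExtensionality.
From mathcomp Require Import all_boot.
Set Implicit Arguments. Unset Strict Implicit. Unset Printing Implicit Defensive.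
Local Open Scope R_scope.

(* An integral point g of the trellis polytope is forced, level by level, to
   put weight 1 on exactly one edge per time step, and the flow constraints
   glue these edges into an edge-path; the parity inequalities of P(H) at a
   0/1 point say exactly that every check has even weight, so the inputs of
   the path form a codeword.  Conversely, every codeword input/state pair of
   positive likelihood is an edge-path whose indicator lies in P_T(H), and
   the cost of an edge-path indicator is -ln of its likelihood.  Minimality
   of g against these indicators is therefore maximality of the likelihood. *)

Definition bitR (b : bool) : R := if b then R1 else R0.

Lemma bitR_bounds (b : bool) : 0 <= bitR b <= 1.
Proof. by case: b => /=; lra. Qed.

Lemma sumR_ge0 (I : Type) (s : seq I) (Q : pred I) (F : I -> R) :
  (forall i, Q i -> 0 <= F i) -> 0 <= \big[Rplus/R0]_(i <- s | Q i) F i.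
Proof.
move=> F_ge0; elim: s => [|a s IH]; first by rewrite big_nil; lra.
by rewrite big_cons; case: ifP => // Qa; have := F_ge0 a Qa; lra.
Qed.

Lemma prodR_gt0 (I : Type) (s : seq I) (Q : pred I) (F : I -> R) :
  (forall i, Q i -> 0 < F i) -> 0 < \big[Rmult/R1]_(i <- s | Q i) F i.
Proof.
move=> F_gt0; elim: s => [|a s IH]; first by rewrite big_nil; lra.
by rewrite big_cons; case: ifP => // Qa; apply: Rmult_lt_0_compat; auto.
Qed.

Lemma ln_prodR (I : Type) (s : seq I) (Q : pred I) (F : I -> R) :
  (forall i, Q i -> 0 < F i) ->
  ln (\big[Rmult/R1]_(i <- s | Q i) F i) = \big[Rplus/R0]_(i <- s | Q i) ln (F i).
Proof.
move=> F_gt0; elim: s => [|a s IH]; first by rewrite !big_nil ln_1.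
rewrite !big_cons; case: ifP => // Qa.
by rewrite ln_mult ?IH //; [apply: F_gt0 | apply: prodR_gt0].
Qed.

Lemma prodR_eq0 (I : finType) (F : I -> R) (i : I) :
  F i = 0 -> \big[Rmult/R1]_(k : I) F k = 0.
Proof. by move=> Fi0; rewrite (bigD1 i) //= Fi0 Rmult_0_l. Qed.

Lemma sumR_bitR (I : finType) (A : {pred I}) (x : I -> bool) :
  \big[Rplus/R0]_(i in A) bitR (x i) = INR #|[set i in A | x i]|.
Proof.
rewrite /bitR -big_mkcondr /= (eq_bigl (mem [set i in A | x i])); last first.
  by move=> i; rewrite !inE.
rewrite big_const; elim: #|_| => [|k IH] //.
by rewrite iterS IH S_INR /=; lra.
Qed.

Lemma sum01_eq1_one_hot (T : finType) (Q : pred T) (g : T -> R) :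
  (forall e, g e = R0 \/ g e = R1) ->
  \big[Rplus/R0]_(e | Q e) g e = R1 ->
  (exists e, Q e /\ g e = R1) /\
  (forall e1 e2, Q e1 -> Q e2 -> g e1 = R1 -> g e2 = R1 -> e1 = e2).
Proof.
move=> g01 sum1; have g_ge0 e : 0 <= g e by case: (g01 e) => ->; lra.
split.
  apply: NNPP => no_one; suff : \big[Rplus/R0]_(e | Q e) g e = R0 by lra.
  by apply: big1 => e Qe; case: (g01 e) => // ge1; case: no_one; exists e.
move=> e1 e2 Qe1 Qe2 ge1 ge2; case: (eqVneq e1 e2) => // ne12.
move: sum1; rewrite (bigD1 e1) //= (bigD1 e2) /=; last by rewrite Qe2 eq_sym ne12.
have := @sumR_ge0 T (index_enum T) (fun e => Q e && (e != e1) && (e != e2)) g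
  (fun e _ => g_ge0 e).
by rewrite ge1 ge2; lra.
Qed.

Lemma sum_bitR_codom (I T : finType) (tm : T -> I) (q : I -> T) (Q : pred T) (i : I) :
  (forall k, tm (q k) = k) -> (forall e, Q e -> tm e = i) ->
  \big[Rplus/R0]_(e | Q e) bitR (e \in codom q) = bitR (Q (q i)).
Proof.
move=> qK Qi; case Qqi: (Q (q i)).
  rewrite (bigD1 (q i)) //= codom_f big1 /=; first lra.
  move=> e /andP[Qe ne]; case: codomP => // [[k ek]]; subst e.
  by move: ne; rewrite -(Qi _ Qe) qK eqxx.
apply: big1 => e Qe; case: codomP => // [[k ek]]; subst e.
by move: (Qi _ Qe); rewrite qK => ki; rewrite -ki Qe in Qqi.
Qed.

Lemma sum_bitR_codom_mul (I T : finType) (tm : T -> I) (q : I -> T) (b : T -> R) :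
  (forall k, tm (q k) = k) ->
  \big[Rplus/R0]_(e : T) (bitR (e \in codom q) * b e) = \big[Rplus/R0]_(k : I) b (q k).
Proof.
move=> qK; have q_inj : injective q by move=> k1 k2 qk; rewrite -(qK k1) qk qK.
rewrite (eq_bigr (fun e => if e \in codom q then b e else R0)); last first.
  by move=> e _; rewrite /bitR; case: ifP => _; lra.
by rewrite -big_mkcond /= -big_uniq ?big_image // map_inj_uniq ?enum_uniq.
Qed.

Lemma in_LCP_bitRE (n : nat) (I : {set 'I_n}) (x : 'I_n -> bool) :
  in_LCP I (fun i => bitR (x i)) <-> ~~ odd #|[set i in I | x i]|.
Proof.
split=> [[_ LCP_ineq] | even_x].
  apply/negP => odd_x.
  have sub_x : [set i in I | x i] \subset I.
    by apply/subsetP => i; rewrite inE => /andP[].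
  have := LCP_ineq _ sub_x odd_x; rewrite !sumR_bitR.
  have -> : [set i0 in [set i in I | x i] | x i0] = [set i in I | x i].
    by apply/setP => i; rewrite !inE; case: (x i); rewrite ?andbT ?andbF.
  have -> : [set i0 in I :\: [set i in I | x i] | x i0] = set0.
    by apply/setP => i; rewrite !inE; case: (i \in I); case: (x i).
  by rewrite cards0 /=; lra.
split=> [i | Sset sSI odd_S]; first exact: bitR_bounds.
rewrite !sumR_bitR.
set a := #|[set i in Sset | x i]|; set b := #|[set i in I :\: Sset | x i]|.
have a_le : (a <= #|Sset|)%N.
  by apply: subset_leq_card; apply/subsetP => i; rewrite inE => /andP[].
have ab : (a + b)%N = #|[set i in I | x i]|.
  rewrite -(cardsID Sset [set i in I | x i]); congr (_ + _)%N; apply: eq_card => i;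
    rewrite !inE; case iS: (i \in Sset); rewrite ?andbT ?andbF //=.
  by rewrite (subsetP sSI _ iS).
(* parity: if all of Sset is hit, then b is odd, hence positive *)
have key : (a + 1 <= #|Sset| + b)%N.
  move: a_le; rewrite leq_eqVlt => /orP[/eqP aS | a_lt]; last first.
    by rewrite addn1; apply: leq_trans (leq_addr _ _).
  have odd_b : odd b by move: even_x; rewrite -ab oddD aS odd_S; case: (odd b).
  by rewrite aS leq_add2l lt0n; apply: contraTneq odd_b => ->.
by have := le_INR _ _ (elimT leP key); rewrite !plus_INR /=; lra.
Qed.

Lemma relaxed_polytope_bitRE (r n : nat) (H : 'I_r -> 'I_n -> bool) (x : 'I_n -> bool) :
  in_relaxed_polytope H (fun i => bitR (x i)) <-> codeword H x.
Proof.
have checkE j : [set i in check_set H j | x i] = [set i | H j i && x i].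
  by apply/setP => i; rewrite !inE.
by split=> Hx j; [rewrite -checkE; apply/in_LCP_bitRE | apply/in_LCP_bitRE; rewrite checkE].
Qed.

Lemma posbP (x : R) : posb x -> 0 < x.
Proof. by rewrite /posb; case: Rlt_dec. Qed.

Lemma posbT (x : R) : 0 < x -> posb x.
Proof. by rewrite /posb; case: Rlt_dec. Qed.

Section Trellis.

Variables (n : nat) (S : finType) (Y : Type).
Variables (P : Y -> S -> bool -> S -> R) (P0 : S -> R) (y : 'I_n -> Y).

Local Notation edge := (Edge P P0 y).

Definition path_inputs (q : 'I_n -> edge) (i : 'I_n) : bool := ex (val (q i)).

Definition traverses (q : 'I_n -> edge) (st : 'I_n.+1 -> S) : Prop :=
  (forall i, st (widen_ord (leqnSn n) i) = es (val (q i))) /\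
  (forall i, st (lift ord0 i) = es' (val (q i))).

Definition path_states (q : 'I_n -> edge) (s1 : S) (k : 'I_n.+1) : S :=
  if unlift ord0 k is Some j then es' (val (q j)) else s1.

Lemma path_states_traverses (q : 'I_n -> edge) (i0 : 'I_n) :
  edge_path q -> val i0 = 0%N -> traverses q (path_states q (es (val (q i0)))).
Proof.
move=> [_ q_conn] i00; split=> i; last by rewrite /path_states liftK.
rewrite /path_states; case: unliftP => [j /(congr1 val) /= ij | /(congr1 val) /= i0E].
  exact: q_conn ij.
by congr (es (val (q _))); apply: val_inj; exact: (etrans i00 (esym i0E)).
Qed.

Lemma sum_path_indicator (q : 'I_n -> edge) (Q : pred edge) (i : 'I_n) :
  (forall k, et (val (q k)) = k) -> (forall e, Q e -> et (val e) = i) ->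
  \big[Rplus/R0]_(e | Q e) path_indicator q e = bitR (Q (q i)).
Proof. exact: (sum_bitR_codom (tm := fun e : edge => et (val e))). Qed.

Lemma trellis_level_sum (g : edge -> R) (i : nat) :
  in_trellis_polytope g -> (i < n)%N ->
  \big[Rplus/R0]_(e | val (et (val e)) == i) g e = R1.
Proof.
move=> [_ [level0 flow]]; elim: i => [|i IH] lt_i_n //.
rewrite (partition_big (fun e => es (val e)) predT) //=.
rewrite (eq_bigr (fun j => \big[Rplus/R0]_(e | (val (et (val e)) == i) &&
                                                (es' (val e) == j)) g e)).
  by rewrite -(partition_big (fun e => es' (val e)) predT) //= IH // ltnW.
by move=> j _; rewrite flow.
Qed.

Lemma trellis_length_gt0 (g : edge -> R) : in_trellis_polytope g -> (0 < n)%N.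
Proof.
move=> [_ [level0 _]]; have [e _ | no_edge] := pickP (@predT edge).
  exact: leq_ltn_trans (leq0n _) (ltn_ord (et (val e))).
by move: level0; rewrite big_pred0 => [|e]; [lra | have := no_edge e].
Qed.

Lemma integral_trellis_indicator (g : edge -> R) :
  in_trellis_polytope g -> (forall e, g e = R0 \/ g e = R1) ->
  exists q : 'I_n -> edge,
    (forall i, et (val (q i)) = i) /\ (forall e, g e = path_indicator q e).
Proof.
move=> g_trellis g01.
have one_hot (i : 'I_n) := sum01_eq1_one_hot g01 (trellis_level_sum g_trellis (ltn_ord i)).
have [q qP] := fin_all_exists (fun i => proj1 (one_hot i)).
have q_time i : et (val (q i)) = i by apply: val_inj; case: (qP i) => /eqP.
exists q; split=> // e; rewrite /path_indicator; case: ifP => [/codomP [k ->] | e_notin].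
  by case: (qP k).
case: (g01 e) => // ge1; have [_ unique_one] := one_hot (et (val e)).
have e_q : e = q (et (val e)).
  by apply: unique_one => //; [rewrite q_time | case: (qP (et (val e)))].
by rewrite e_q codom_f in e_notin.
Qed.

Lemma path_indicator_edge_path (q : 'I_n -> edge) :
  (forall i, et (val (q i)) = i) -> in_trellis_polytope (path_indicator q) -> edge_path q.
Proof.
move=> q_time [_ [_ flow]]; split=> // i k ik.
have i1_lt : ((val i).+1 < n)%N by rewrite -ik ltn_ord.
have := flow _ (es' (val (q i))) i1_lt.
rewrite (sum_path_indicator (i := i)) //; last by move=> e /andP[/eqP ? _]; exact: val_inj.
rewrite (sum_path_indicator (i := k)) //; last first.
  by move=> e /andP[/eqP ? _]; apply: val_inj; rewrite ik.
rewrite !q_time ik !eqxx /=; case: eqP => [-> // | _] /=; lra.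
Qed.

Lemma integral_trellis_edge_path (g : edge -> R) :
  in_trellis_polytope g -> (forall e, g e = R0 \/ g e = R1) ->
  exists2 q : 'I_n -> edge, edge_path q & g = path_indicator q.
Proof.
move=> g_trellis g01; have [q [q_time gE]] := integral_trellis_indicator g_trellis g01.
have {}gE : g = path_indicator q by apply: functional_extensionality.
by exists q => //; apply: path_indicator_edge_path; rewrite -?gE.
Qed.

Lemma edge_path_trellis_polytope (q : 'I_n -> edge) :
  (0 < n)%N -> edge_path q -> in_trellis_polytope (path_indicator q).
Proof.
move=> n_gt0 [q_time q_conn]; split; first by move=> e; apply: bitR_bounds.
split.
  rewrite (sum_path_indicator (i := Ordinal n_gt0)) ?q_time //.
  by move=> e /eqP ?; apply: val_inj.
move=> i j i1_lt; have i_lt := ltnW i1_lt.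
rewrite (sum_path_indicator (i := Ordinal i_lt)) //; last first.
  by move=> e /andP[/eqP ? _]; apply: val_inj.
rewrite (sum_path_indicator (i := Ordinal i1_lt)) //; last first.
  by move=> e /andP[/eqP ? _]; apply: val_inj.
by rewrite !q_time !eqxx (q_conn (Ordinal i_lt) (Ordinal i1_lt)).
Qed.

Lemma projQ_path_indicator (q : 'I_n -> edge) :
  (forall i, et (val (q i)) = i) ->
  projQ (path_indicator q) = (fun i => bitR (path_inputs q i)).
Proof.
move=> q_time; apply: functional_extensionality => i.
rewrite /projQ (sum_path_indicator (i := i)) ?q_time ?eqxx //.
by move=> e /andP[/eqP].
Qed.

Lemma edge_path_in_PT (r : nat) (H : 'I_r -> 'I_n -> bool) (q : 'I_n -> edge) :
  (0 < n)%N -> edge_path q -> codeword H (path_inputs q) -> in_PT H (path_indicator q).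
Proof.
move=> n_gt0 q_path q_code; split; first exact: edge_path_trellis_polytope.
by rewrite projQ_path_indicator; [apply/relaxed_polytope_bitRE | case: q_path].
Qed.

Lemma edge_path_factor (q : 'I_n -> edge) (st : 'I_n.+1 -> S) (i : 'I_n) :
  edge_path q -> traverses q st ->
  P (y i) (st (lift ord0 i)) (path_inputs q i) (st (widen_ord (leqnSn n) i)) =
  P (y (et (val (q i)))) (es' (val (q i))) (ex (val (q i))) (es (val (q i))).
Proof. by move=> [q_time _] [st_w st_l]; rewrite q_time st_w st_l. Qed.

Lemma edge_path_initial (q : 'I_n -> edge) (st : 'I_n.+1 -> S) (i0 : 'I_n) :
  edge_path q -> traverses q st -> val i0 = 0%N -> 0 < P0 (st ord0).
Proof.
move=> [q_time _] [st_w _] i00; have := valP (q i0).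
have -> : ord0 = widen_ord (leqnSn n) i0 by apply: val_inj; rewrite /= i00.
by rewrite st_w /is_edge q_time i00 /= => /andP[_ /posbP].
Qed.

Lemma joint_lik_edge_path_gt0 (q : 'I_n -> edge) (st : 'I_n.+1 -> S) :
  (0 < n)%N -> edge_path q -> traverses q st ->
  0 < joint_lik P P0 y (path_inputs q) st.
Proof.
move=> n_gt0 q_path q_st; rewrite /joint_lik.
apply: Rmult_lt_0_compat; last exact: (edge_path_initial (i0 := Ordinal n_gt0)) q_path q_st erefl.
apply: prodR_gt0 => i _; rewrite edge_path_factor //.
by have := valP (q i); rewrite /is_edge => /andP[/posbP].
Qed.

Lemma sum_branch_metric_edge_path (q : 'I_n -> edge) (st : 'I_n.+1 -> S) :
  (0 < n)%N -> edge_path q -> traverses q st ->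
  \big[Rplus/R0]_(i < n) branch_metric (q i) = - ln (joint_lik P P0 y (path_inputs q) st).
Proof.
move=> n_gt0 q_path q_st; set a := fun i : 'I_n => P (y i) (st (lift ord0 i))
  (path_inputs q i) (st (widen_ord (leqnSn n) i)).
have a_gt0 i : 0 < a i.
  by rewrite /a edge_path_factor //; have := valP (q i); rewrite /is_edge => /andP[/posbP].
have P0_gt0 := edge_path_initial (i0 := Ordinal n_gt0) q_path q_st erefl.
(* the factor P(s_1) is carried by the metric of the first edge only *)
pose c (i : 'I_n) := if val i == 0%N then ln (P0 (st ord0)) else R0.
have metricE i : branch_metric (q i) = - (ln (a i) + c i).
  have [q_time _] := q_path; have [st_w _] := q_st.
  rewrite /branch_metric /c -(edge_path_factor i q_path q_st) -/(a i) q_time.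
  case: eqP => [i0 | _]; last lra.
  rewrite -st_w (_ : widen_ord _ i = ord0); last exact: val_inj.
  by rewrite ln_mult //; lra.
have sum_c : \big[Rplus/R0]_(i < n) c i = ln (P0 (st ord0)).
  rewrite (bigD1 (Ordinal n_gt0)) //= big1 /c /=; first lra.
  by move=> i /eqP ne_i; case: eqP => // i0; case: ne_i; apply: val_inj.
rewrite (eq_bigr _ (fun i _ => metricE i)) -(big_morph Ropp Ropp_plus_distr Ropp_0).
have prod_a_gt0 : 0 < \big[Rmult/R1]_(i < n) a i by apply: prodR_gt0 => i _.
by rewrite big_split /= sum_c /joint_lik ln_mult ?ln_prodR // => i _; apply: a_gt0.
Qed.

Lemma LP_cost_edge_path (q : 'I_n -> edge) (st : 'I_n.+1 -> S) :
  (0 < n)%N -> edge_path q -> traverses q st ->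
  LP_cost (path_indicator q) = - ln (joint_lik P P0 y (path_inputs q) st).
Proof.
move=> n_gt0 q_path q_st; rewrite -sum_branch_metric_edge_path //.
by have [q_time _] := q_path; apply: (sum_bitR_codom_mul (tm := fun e : edge => et (val e))).
Qed.

Lemma joint_lik_gt0_edge_path (x : 'I_n -> bool) (st : 'I_n.+1 -> S) :
  (forall yy s' b s, 0 <= P yy s' b s) -> (forall s, 0 <= P0 s) ->
  0 < joint_lik P P0 y x st ->
  exists q : 'I_n -> edge, [/\ edge_path q, traverses q st & path_inputs q = x].
Proof.
move=> P_ge0 P0_ge0 lik_gt0.
have factor_gt0 i : 0 < P (y i) (st (lift ord0 i)) (x i) (st (widen_ord (leqnSn n) i)).
  case: (Rle_lt_dec (P (y i) (st (lift ord0 i)) (x i) (st (widen_ord (leqnSn n) i))) 0) => // le0.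
  move: lik_gt0; rewrite /joint_lik (prodR_eq0 (i := i)) ?Rmult_0_l; first lra.
  by apply: Rle_antisym => //; apply: P_ge0.
have P0_gt0 : 0 < P0 (st ord0).
  case: (Rle_lt_dec (P0 (st ord0)) 0) => // le0.
  have P0_eq0 : P0 (st ord0) = 0 by apply: Rle_antisym => //; apply: P0_ge0.
  by move: lik_gt0; rewrite /joint_lik P0_eq0 Rmult_0_r; lra.
have edgeP i : is_edge P P0 y (i, st (widen_ord (leqnSn n) i), st (lift ord0 i), x i).
  rewrite /is_edge /= posbT ?factor_gt0 //=; apply/implyP => /eqP i0.
  by rewrite (_ : widen_ord _ i = ord0) ?posbT //; apply: val_inj.
exists (fun i => exist (is_edge P P0 y) _ (edgeP i) : edge).
split=> //; split=> // i k ik /=.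
by congr st; apply: val_inj; rewrite /= ik.
Qed.

End Trellis.

Theorem theorem3
  (r n : nat) (H : 'I_r -> 'I_n -> bool)
  (S : finType) (Y : Type)
  (P : Y -> S -> bool -> S -> R) (P0 : S -> R)
  (HPnn : forall (yy : Y) (s' : S) (x : bool) (s : S), Rle R0 (P yy s' x s))
  (HP0nn : forall s : S, Rle R0 (P0 s))
  (HP0sum : \big[Rplus/R0]_(s : S) P0 s = R1)
  (y : 'I_n -> Y)
  (gstar : Edge P P0 y -> R)
  (Hmin : LP_minimizer H gstar)
  (Hint : forall e, gstar e = R0 \/ gstar e = R1) :
  exists p : 'I_n -> Edge P P0 y,
    edge_path p /\
    (forall e, gstar e = path_indicator p e) /\
    codeword H (fun i => ex (val (p i))) /\
    exists st : 'I_n.+1 -> S,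
      (forall i : 'I_n, st (widen_ord (leqnSn n) i) = es (val (p i))) /\
      (forall i : 'I_n, st (lift ord0 i) = es' (val (p i))) /\
      forall (x' : 'I_n -> bool) (st' : 'I_n.+1 -> S),
        codeword H x' ->
        Rle (joint_lik P P0 y x' st') (joint_lik P P0 y (fun i => ex (val (p i))) st).
Proof.
have [[g_trellis g_relaxed] g_opt] := Hmin.
have n_gt0 := trellis_length_gt0 g_trellis.
have [p p_path gE] := integral_trellis_edge_path g_trellis Hint.
have p_code : codeword H (path_inputs p).
  by apply/relaxed_polytope_bitRE; rewrite -projQ_path_indicator -?gE //; case: p_path.
pose st := path_states p (es (val (p (Ordinal n_gt0)))).
have p_st : traverses p st by apply: path_states_traverses.
exists p; split=> //; split=> [e | ]; first by rewrite gE.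
split=> //; exists st; split; first exact: p_st.1.
split=> [|x' st' x'_code]; first exact: p_st.2.
change (fun i => ex (val (p i))) with (path_inputs p).
have p_lik_gt0 := joint_lik_edge_path_gt0 n_gt0 p_path p_st.
have [lik'_le0 | lik'_gt0] := Rle_lt_dec (joint_lik P P0 y x' st') 0; first lra.
have [q [q_path q_st q_inputs]] := joint_lik_gt0_edge_path HPnn HP0nn lik'_gt0.
subst x'; have := g_opt _ (edge_path_in_PT n_gt0 q_path x'_code).
rewrite gE (LP_cost_edge_path n_gt0 p_path p_st) (LP_cost_edge_path n_gt0 q_path q_st).
by move=> ln_le; apply: Rnot_lt_le => /(ln_increasing _ _ p_lik_gt0); lra.
Qed.
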